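(* Let $X,Y$ be presheaves of sets on $\mathscr{V}_f$ such that $X$ takes values in finite sets and $Y$ is finite. Then the set of natural transformations $\mathrm{Hom}(X,Y)$ is finite.
   Context: $p$ prime, $\mathbb{F}=\mathbb{F}_p$, $\mathscr{V}_f$ finite-dimensional $\mathbb{F}$-vector spaces; presheaves are contravariant functors $\mathscr{V}_f\to$ Sets. A presheaf $Y$ is finite if there is a monomorphism $Y\hookrightarrow F_Y$ of presheaves of sets with $F_Y$ a functor $\mathscr{V}_f^{\mathrm{op}}\to$ ($\mathbb{F}$-vector spaces) having a finite composition series. *)

From mathcomp Require Import all_boot all_algebra.
Set Implicit Arguments. Unset Strict Implicit. Unset Printing Implicit Defensive.
Import GRing.Theory.
Local Open Scope ring_scope.

(* The category V_f of finite-dimensional F_p-vector spaces is modelled by its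
   skeleton: objects are n : nat (standing for F_p^n, row vectors), morphisms
   F_p^n -> F_p^m are matrices A : 'M_(n,m) (acting by v |-> v *m A), and the
   composite of A : n -> m followed by B : m -> k is A *m B. *)

Definition finite_type (T : Type) : Prop :=
  exists (N : nat) (f : 'I_N -> T), forall x, exists i, f i = x.

Section Presheaves.

Variable p : nat.
Local Notation F := 'F_p.

Record presheaf := Presheaf {
  ps_obj :> nat -> Type;
  ps_map : forall n m : nat, 'M[F]_(n, m) -> ps_obj m -> ps_obj n;
  ps_id : forall n (x : ps_obj n), ps_map 1%:M x = x;
  ps_comp : forall n m k (A : 'M[F]_(n, m)) (B : 'M[F]_(m, k)) (x : ps_obj k),
      ps_map (A *m B) x = ps_map A (ps_map B x)
}.
Arguments ps_map _ {n m}.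

Definition is_nat_trans {X Y : presheaf} (eta : forall n, X n -> Y n) : Prop :=
  forall n m (A : 'M[F]_(n, m)) (x : X m),
    eta n (ps_map X A x) = ps_map Y A (eta m x).

Definition finite_Hom (X Y : presheaf) : Prop :=
  exists (N : nat) (f : 'I_N -> forall n, X n -> Y n),
    forall eta : forall n, X n -> Y n, is_nat_trans eta ->
      exists i, forall n (x : X n), eta n x = f i n x.

Record vpresheaf := VPresheaf {
  vp_obj : nat -> lmodType F;
  vp_map : forall n m : nat, 'M[F]_(n, m) -> {linear vp_obj m -> vp_obj n};
  vp_id : forall n (v : vp_obj n), vp_map 1%:M v = v;
  vp_comp : forall n m k (A : 'M[F]_(n, m)) (B : 'M[F]_(m, k)) (v : vp_obj k),
      vp_map (A *m B) v = vp_map A (vp_map B v)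
}.
Arguments vp_map _ {n m}.

Definition is_subfunctor (G : vpresheaf) (S : forall n, vp_obj G n -> Prop) : Prop :=
  (forall n, S n 0) /\
  (forall n (u v : vp_obj G n), S n u -> S n v -> S n (u + v)) /\
  (forall n (a : F) (v : vp_obj G n), S n v -> S n (a *: v)) /\
  (forall n m (A : 'M[F]_(n, m)) (v : vp_obj G m), S m v -> S n (vp_map G A v)).

Definition sub_incl (G : vpresheaf) (S T : forall n, vp_obj G n -> Prop) : Prop :=
  forall n v, S n v -> T n v.

Definition sub_strict (G : vpresheaf) (S T : forall n, vp_obj G n -> Prop) : Prop :=
  sub_incl S T /\ exists n v, T n v /\ ~ S n v.

(* finite composition series 0 = S_0 < S_1 < ... < S_k = G, each factor
   S_(i+1)/S_i simple, i.e. there is no subfunctor strictly between S_i and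
   S_(i+1) (correspondence theorem) *)
Definition has_finite_composition_series (G : vpresheaf) : Prop :=
  exists (k : nat) (S : nat -> forall n, vp_obj G n -> Prop),
    (forall i, is_subfunctor (S i)) /\
    (forall n v, S 0%N n v <-> v = 0) /\
    (forall n v, S k n v) /\
    (forall i, (i < k)%N ->
       sub_strict (S i) (S i.+1) /\
       ~ (exists T, is_subfunctor T /\ sub_strict (S i) T /\ sub_strict T (S i.+1))).

Definition finite_presheaf (Y : presheaf) : Prop :=
  exists (G : vpresheaf) (iota : forall n, Y n -> vp_obj G n),
    (forall n m (A : 'M[F]_(n, m)) (y : Y m),
        iota n (ps_map Y A y) = vp_map G A (iota m y)) /\
    (forall n, injective (iota n)) /\
    has_finite_composition_series G.

End Presheaves.

(* Y embeds into a functor G with a finite composition series 0 = S_0 < ... < S_k = G.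
   Each composition step is S_(i+1) = S_i + <v_i> for a single v_i in some G(m_i), and
   <v_i>(n) is spanned by the finitely many G(A) v_i, so every G(n) is finite.  Let d
   bound the degrees m_i.  The elements y of G(n) with G(A) y = 0 for all A : F^d -> F^n
   form a subfunctor K which vanishes in degrees <= d (F^m is a retract of F^d); if K
   met S_(i+1) outside S_i, simplicity would give S_(i+1) = S_i + (K /\ S_(i+1)), and
   v_i would lie in S_i.  Hence K = 0, so a natural transformation X -> Y is determined
   by its component at F^d, which ranges over the finite set of maps X(d) -> Y(d). *)

From mathcomp Require Import all_boot all_algebra.
From Stdlib Require Import ClassicalEpsilon.
Set Implicit Arguments. Unset Strict Implicit. Unset Printing Implicit Defensive.
Import GRing.Theory.
Local Open Scope ring_scope.

Lemma finite_type_surj (T : finType) (U : Type) (g : T -> U) :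
  (forall u, exists t, g t = u) -> finite_type U.
Proof.
move=> g_surj; exists #|T|, (fun i => g (enum_val i)) => u.
by have [t <-] := g_surj u; exists (enum_rank t); rewrite enum_rankK.
Qed.

Lemma finite_image_reps (T : Type) (C : finType) (P : T -> Prop) (phi : T -> C) :
  exists N (f : 'I_N -> T), forall t, P t -> exists k, P (f k) /\ phi (f k) = phi t.
Proof.
have [[t0 Pt0] | P0] := classic (exists t, P t); last first.
  exists 0%N, (fun k : 'I_0 => False_rect T (notF (ltn_ord k))) => t Pt.
  by case: P0; exists t.
pose rep (c : C) : T :=
  match excluded_middle_informative (exists t, P t /\ phi t = c) with
  | left e => proj1_sig (constructive_indefinite_description _ e) | right _ => t0 end.
exists #|C|, (fun k => rep (enum_val k)) => t Pt; exists (enum_rank (phi t)).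
rewrite enum_rankK /rep; case: excluded_middle_informative => [e | ne].
  by case: constructive_indefinite_description.
by case: ne; exists t.
Qed.

Lemma finite_type_inj (A B : Type) (i : A -> B) :
  injective i -> finite_type B -> finite_type A.
Proof.
move=> i_inj [N [g g_surj]].
have code b : {k : 'I_N | g k = b} := constructive_indefinite_description _ (g_surj b).
have [M [f Hf]] := finite_image_reps (fun _ => True) (fun a => proj1_sig (code (i a))).
exists M, f => a; have [k [_ E]] := Hf a I; exists k; apply: i_inj.
by have := congr1 g E; do 2![case: (code _) => ? ->].
Qed.

Lemma finite_eval_classes (T A B : Type) (P : T -> Prop) (ev : T -> A -> B) :
  finite_type A -> finite_type B ->
  exists N (f : 'I_N -> T), forall t, P t ->
    exists k, P (f k) /\ forall a, ev t a = ev (f k) a.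
Proof.
move=> [NA [gA gA_surj]] [NB [gB gB_surj]].
have code b : {j : 'I_NB | gB j = b}.
  exact: constructive_indefinite_description _ (gB_surj b).
pose phi t : {ffun 'I_NA -> 'I_NB} := [ffun j => proj1_sig (code (ev t (gA j)))].
have [N [f Hf]] := finite_image_reps P phi.
exists N, f => t Pt; have [k [Pk phi_eq]] := Hf t Pt; exists k; split=> // a.
have [j <-] := gA_surj a.
have := congr1 (fun c : {ffun 'I_NA -> 'I_NB} => gB (c j)) (esym phi_eq).
by rewrite /= !ffunE; do 2![case: (code _) => ? ->].
Qed.

Lemma finite_type_spanned (R : finNzRingType) (V : lmodType R) (I : finType)
    (w : I -> V) :
  (forall u, exists c : I -> R, u = \sum_i c i *: w i) -> finite_type V.
Proof.
move=> w_span; apply: (@finite_type_surj {ffun I -> R} _ (fun c => \sum_i c i *: w i)).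
move=> u; have [c ->] := w_span u; exists (finfun c).
by apply: eq_bigr => i _; rewrite ffunE.
Qed.

Lemma pid_mx_retract (R : pzRingType) n d :
  (n <= d)%N -> (pid_mx n : 'M[R]_(n, d)) *m pid_mx n = 1%:M.
Proof. by move=> nd; rewrite mul_pid_mx !minnn (minn_idPr nd) pid_mx_1. Qed.

Section Subfunctors.

Variables (p : nat) (G : vpresheaf p).
Local Notation V := (vp_obj G).
Local Notation Gm := (vp_map G).

Definition subf_add (S T : forall n, V n -> Prop) n (u : V n) :=
  exists s t, S n s /\ T n t /\ u = s + t.

Definition subf_meet (S T : forall n, V n -> Prop) n (u : V n) := S n u /\ T n u.

Definition cyclic_subf m (v : V m) n (u : V n) :=
  exists c : 'M['F_p]_(n, m) -> 'F_p, u = \sum_A c A *: Gm A v.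

Definition vanish_at d n (y : V n) := forall A : 'M['F_p]_(d, n), Gm A y = 0.

Definition finitely_spanned n (S : V n -> Prop) :=
  exists (I : finType) (w : I -> V n), forall u, S u ->
    exists c : I -> 'F_p, u = \sum_i c i *: w i.

Lemma subfunctor_add S T : is_subfunctor S -> is_subfunctor T ->
  is_subfunctor (subf_add S T).
Proof.
move=> [S0 [SD [SZ SM]]] [T0 [TD [TZ TM]]]; split; [|split; [|split]].
- by move=> n; exists 0, 0; rewrite addr0.
- move=> n _ _ [s [t [Ss [Tt ->]]]] [s' [t' [Ss' [Tt' ->]]]].
  by exists (s + s'), (t + t'); rewrite addrACA; auto.
- move=> n a _ [s [t [Ss [Tt ->]]]].
  by exists (a *: s), (a *: t); rewrite scalerDr; auto.
- move=> n m A _ [s [t [Ss [Tt ->]]]].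
  by exists (Gm A s), (Gm A t); rewrite linearD; auto.
Qed.

Lemma subfunctor_meet S T : is_subfunctor S -> is_subfunctor T ->
  is_subfunctor (subf_meet S T).
Proof.
move=> [S0 [SD [SZ SM]]] [T0 [TD [TZ TM]]].
split; [|split; [|split]].
- by move=> n; split.
- by move=> n u v [Su Tu] [Sv Tv]; split; auto.
- by move=> n a v [Sv Tv]; split; auto.
- by move=> n m A v [Sv Tv]; split; auto.
Qed.

Lemma subfunctor_cyclic m (v : V m) : is_subfunctor (cyclic_subf v).
Proof.
split; [|split; [|split]].
- by move=> n; exists (fun=> 0); rewrite big1 // => A _; rewrite scale0r.
- move=> n _ _ [c ->] [c' ->]; exists (fun A => c A + c' A).
  by rewrite -big_split; apply: eq_bigr => A _; rewrite scalerDl.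
- move=> n a _ [c ->]; exists (fun A => a * c A).
  by rewrite scaler_sumr; apply: eq_bigr => A _; rewrite scalerA.
- move=> n n' B _ [c ->]; exists (fun A' => \sum_(A | B *m A == A') c A).
  rewrite linear_sum (partition_big (fun A => B *m A) predT) //=.
  apply: eq_bigr => A' _; rewrite scaler_suml; apply: eq_bigr => A /eqP <-.
  by rewrite linearZ /= vp_comp.
Qed.

Lemma cyclic_subf_gen m (v : V m) : cyclic_subf v v.
Proof.
exists (fun A => (A == 1%:M)%:R); rewrite (bigD1 1%:M) //= eqxx scale1r vp_id.
by rewrite big1 ?addr0 // => A /negPf ->; rewrite scale0r.
Qed.

Lemma cyclic_subf_min T m (v : V m) :
  is_subfunctor T -> T m v -> sub_incl (cyclic_subf v) T.
Proof.
move=> [T0 [TD [TZ TM]]] Tv n _ [c ->].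
by apply: (big_ind (T n)) => // [x y | A _]; [exact: TD | exact/TZ/TM].
Qed.

Lemma subfunctor_vanish_at d : is_subfunctor (vanish_at d).
Proof.
split; [|split; [|split]].
- by move=> n A; rewrite linear0.
- by move=> n u v Ku Kv A; rewrite linearD /= Ku Kv addr0.
- by move=> n a v Kv A; rewrite linearZ /= Kv scaler0.
- by move=> n m B v Kv A; rewrite -vp_comp Kv.
Qed.

Lemma vanish_at_le d n (y : V n) : (n <= d)%N -> vanish_at d y -> y = 0.
Proof.
by move=> nd Ky; rewrite -(vp_id y) -(pid_mx_retract _ nd) vp_comp Ky linear0.
Qed.

Lemma finitely_spanned_sub n (S T : V n -> Prop) :
  (forall u, S u -> T u) -> finitely_spanned T -> finitely_spanned S.
Proof. by move=> ST [I [w Hw]]; exists I, w => u /ST /Hw. Qed.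

Lemma finitely_spanned_add S T n :
  finitely_spanned (S n) -> finitely_spanned (T n) ->
  finitely_spanned (@subf_add S T n).
Proof.
move=> [I [w Hw]] [J [w' Hw']].
exists (I + J)%type, (fun x => match x with inl i => w i | inr j => w' j end).
move=> _ [s [t [/Hw [c ->] [/Hw' [c' ->] ->]]]].
by exists (fun x => match x with inl i => c i | inr j => c' j end); rewrite big_sumType.
Qed.

Lemma finitely_spanned_cyclic m (v : V m) n : finitely_spanned (@cyclic_subf m v n).
Proof. by exists 'M['F_p]_(n, m), (fun A => Gm A v) => u [c ->]; exists c. Qed.

End Subfunctors.

Section CompositionSeries.

Variables (p : nat) (G : vpresheaf p) (k : nat).
Variable S : nat -> forall n, vp_obj G n -> Prop.
Arguments S : clear implicits.
Local Notation V := (vp_obj G).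
Hypothesis S_sub : forall i, is_subfunctor (S i).
Hypothesis S0 : forall n v, S 0%N n v <-> v = 0.
Hypothesis Sk : forall n v, S k n v.
Hypothesis S_simple : forall i, (i < k)%N ->
  sub_strict (S i) (S i.+1) /\
  ~ (exists T, is_subfunctor T /\ sub_strict (S i) T /\ sub_strict T (S i.+1)).

Lemma composition_step_add i T : (i < k)%N -> is_subfunctor T -> sub_incl T (S i.+1) ->
  (exists n v, T n v /\ ~ S i n v) -> sub_incl (S i.+1) (subf_add (S i) T).
Proof.
move=> ik T_sub T_le [n [v [Tv nSv]]] m u Su; apply: NNPP => nTu.
have [[S_le _] S_max] := S_simple ik.
have [T0 _] := T_sub; have [_ [SD _]] := S_sub i.+1.
apply: S_max; exists (subf_add (S i) T); split; first exact: subfunctor_add.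
split; split.
- by move=> n' s Ss; exists s, 0; rewrite addr0.
- by exists n, v; split=> //; exists 0, v; have [Si0 _] := S_sub i; rewrite add0r.
- by move=> n' _ [s [t [Ss [Tt ->]]]]; apply: SD; [apply: S_le | apply: T_le].
- by exists m, u.
Qed.

Lemma composition_term_spanned i : (i <= k)%N -> forall n, finitely_spanned (S i n).
Proof.
elim: i => [_ n | i IH ik n].
  exists void, (fun x : void => match x with end) => u /S0 ->.
  by exists (fun x : void => match x with end); rewrite big1 // => [[]].
have [[_ [m [v [Sv nSv]]]] _] := S_simple ik.
have v_le := cyclic_subf_min (S_sub i.+1) Sv.
have v_new : exists n' (u : V n'), cyclic_subf v u /\ ~ S i n' u.
  by exists m, v; split=> //; exact: cyclic_subf_gen.
have step := @composition_step_add i _ ik (subfunctor_cyclic v) v_le v_new n.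
apply: finitely_spanned_sub step _; apply: finitely_spanned_add.
  exact: IH (ltnW ik) n.
exact: finitely_spanned_cyclic.
Qed.

Lemma composition_degree_bound : exists d, forall i, (i < k)%N ->
  exists m (v : V m), (m <= d)%N /\ S i.+1 m v /\ ~ S i m v.
Proof.
suff bound j : (j <= k)%N -> exists d, forall i, (i < j)%N ->
  exists m (v : V m), (m <= d)%N /\ S i.+1 m v /\ ~ S i m v by exact: bound.
elim: j => [_ | j IH jk]; first by exists 0%N.
have [d d_bound] := IH (ltnW jk).
have [[_ [m [v [Sv nSv]]]] _] := S_simple jk.
exists (maxn d m) => i; rewrite ltnS leq_eqVlt => /orP [/eqP -> | ij].
  by exists m, v; rewrite leq_maxr.
have [m' [v' [m'd Sv']]] := d_bound i ij.
by exists m', v'; rewrite leq_max m'd.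
Qed.

Lemma vanish_at_trivial d : (forall i, (i < k)%N ->
    exists m (v : V m), (m <= d)%N /\ S i.+1 m v /\ ~ S i m v) ->
  forall n (y : V n), vanish_at d y -> y = 0.
Proof.
move=> d_bound.
suff K_S i : (i <= k)%N -> forall n (y : V n), vanish_at d y -> S i n y -> y = 0.
  by move=> n y Ky; exact: K_S (leqnn k) n y Ky (Sk y).
elim: i => [_ n y _ /S0 // | i IH ik n y Ky Sy].
have [Siy | nSiy] := classic (S i n y); first exact: IH (ltnW ik) n y Ky Siy.
have [m [v [md [Sv nSv]]]] := d_bound i ik.
have T_sub := subfunctor_meet (subfunctor_vanish_at G d) (S_sub i.+1).
have [s [t [Ss [[Kt _] Ev]]]] : subf_add (S i) (subf_meet (vanish_at d) (S i.+1)) v.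
  apply: composition_step_add T_sub _ _ _ _ Sv => //; first by move=> ? ? [].
  by exists n, y.
by case: nSv; rewrite Ev (vanish_at_le md Kt) addr0.
Qed.

End CompositionSeries.

Lemma composition_series_finite p (G : vpresheaf p) :
  has_finite_composition_series G -> forall n, finite_type (vp_obj G n).
Proof.
move=> [k [S [S_sub [S0 [Sk S_simple]]]]] n.
have [I [w w_span]] := composition_term_spanned S_sub S0 S_simple (leqnn k) n.
by apply: (finite_type_spanned (w := w)) => u; exact/w_span/Sk.
Qed.

Lemma composition_series_faithful_degree p (G : vpresheaf p) :
  has_finite_composition_series G ->
  exists d, forall n (y : vp_obj G n), vanish_at d y -> y = 0.
Proof.
move=> [k [S [S_sub [S0 [Sk S_simple]]]]].
have [d d_bound] := composition_degree_bound S_simple.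
by exists d => n y; apply: (vanish_at_trivial S_sub S0 Sk S_simple d_bound).
Qed.

Lemma nat_trans_eq_of_embedding p (X Y : presheaf p) (G : vpresheaf p)
    (iota : forall n, Y n -> vp_obj G n) d (eta eta' : forall n, X n -> Y n) :
  (forall n m (A : 'M['F_p]_(n, m)) y,
     iota n (@ps_map p Y n m A y) = vp_map G A (iota m y)) ->
  (forall n, injective (iota n)) ->
  (forall n (y : vp_obj G n), vanish_at d y -> y = 0) ->
  is_nat_trans eta -> is_nat_trans eta' -> (forall x, eta d x = eta' d x) ->
  forall n x, eta n x = eta' n x.
Proof.
move=> iota_nat iota_inj d_faithful eta_nat eta'_nat eq_d n x.
apply/iota_inj/subr0_eq/d_faithful => A.
by rewrite linearB /= -!iota_nat -eta_nat -eta'_nat eq_d subrr.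
Qed.

Theorem corollary3p9 (p : nat) (hp : prime p) (X Y : presheaf p) :
  (forall n, finite_type (X n)) -> finite_presheaf Y -> finite_Hom X Y.
Proof.
move=> X_fin [G [iota [iota_nat [iota_inj G_series]]]].
have Y_fin n : finite_type (Y n).
  exact: finite_type_inj (iota_inj n) (composition_series_finite G_series n).
have [d d_faithful] := composition_series_faithful_degree G_series.
have [N [f f_reps]] :=
  finite_eval_classes (@is_nat_trans p X Y) (fun eta => eta d) (X_fin d) (Y_fin d).
exists N, f => eta eta_nat; have [i [fi_nat eq_d]] := f_reps eta eta_nat; exists i.
exact: nat_trans_eq_of_embedding iota_nat iota_inj d_faithful eta_nat fi_nat eq_d.
Qed.
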